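(* Let $G$ be a finite simple graph that is prime and belongs to DH $\cap$ co-DH. Then $G$ is isomorphic to $P_4$ or to the Bull.
   Context: All graphs are finite and simple. A graph is distance-hereditary if it has no induced subgraph isomorphic to a hole (an induced cycle of length at least $5$), the house (a $5$-cycle plus one chord; equivalently the complement of $P_5$), the domino (a $6$-cycle $v_1v_2\dots v_6$ plus the chord $v_1v_4$), or the gem (a path $P_4$ plus one vertex adjacent to all four of its vertices). DH $\cap$ co-DH denotes the class of graphs $G$ such that both $G$ and its complement $\overline{G}$ are distance-hereditary. A module of $G=(V,E)$ is a set $M\subseteq V$ such that every $v\in V\setminus M$ is adjacent either to all vertices of $M$ or to none of them; a module is trivial if $|M|=1$ or $M=V$. A graph is prime if all its modules are trivial. $P_4$ is the path on $4$ vertices. The Bull is the graph on vertices $a,b,c,d,e$ with edges $ab,bc,ca,ad,be$. *)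

From mathcomp Require Import all_boot.
Set Implicit Arguments. Unset Strict Implicit. Unset Printing Implicit Defensive.

Definition simple_graph (T : finType) (e : rel T) : Prop :=
  symmetric e /\ irreflexive e.

Definition compl_rel (T : finType) (e : rel T) : rel T :=
  fun x y => (x != y) && ~~ e x y.

Definition edges_rel (n : nat) (l : seq (nat * nat)) : rel 'I_n :=
  fun i j => ((val i, val j) \in l) || ((val j, val i) \in l).

Definition cycle_rel (n : nat) : rel 'I_n :=
  fun i j => (val j == (val i).+1 %% n) || (val i == (val j).+1 %% n).

Definition house_rel : rel 'I_5 :=
  @edges_rel 5 [:: (0,1); (1,2); (2,3); (3,4); (4,0); (0,2)].
Definition domino_rel : rel 'I_6 :=
  @edges_rel 6 [:: (0,1); (1,2); (2,3); (3,4); (4,5); (5,0); (0,3)].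
Definition gem_rel : rel 'I_5 :=
  @edges_rel 5 [:: (0,1); (1,2); (2,3); (4,0); (4,1); (4,2); (4,3)].
Definition P4_rel : rel 'I_4 :=
  @edges_rel 4 [:: (0,1); (1,2); (2,3)].
Definition bull_rel : rel 'I_5 :=
  @edges_rel 5 [:: (0,1); (1,2); (2,0); (0,3); (1,4)].

Definition has_induced (n : nat) (h : rel 'I_n) (T : finType) (e : rel T) : Prop :=
  exists f : 'I_n -> T, injective f /\ forall i j, e (f i) (f j) = h i j.

Definition isomorphic_to (n : nat) (h : rel 'I_n) (T : finType) (e : rel T) : Prop :=
  exists f : 'I_n -> T, bijective f /\ forall i j, e (f i) (f j) = h i j.

Definition distance_hereditary (T : finType) (e : rel T) : Prop :=
  (forall n, 5 <= n -> ~ has_induced (@cycle_rel n) e) /\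
  ~ has_induced house_rel e /\ ~ has_induced domino_rel e /\
  ~ has_induced gem_rel e.

Definition DH_coDH (T : finType) (e : rel T) : Prop :=
  distance_hereditary e /\ distance_hereditary (compl_rel e).

Definition is_module (T : finType) (e : rel T) (M : {set T}) : Prop :=
  forall v, v \notin M ->
    (forall x, x \in M -> e v x) \/ (forall x, x \in M -> ~~ e v x).

Definition prime_graph (T : finType) (e : rel T) : Prop :=
  forall M : {set T}, is_module e M -> #|M| <= 1 \/ M = setT.

From mathcomp Require Import all_boot zify.
From Stdlib Require Import Classical.
Set Implicit Arguments. Unset Strict Implicit. Unset Printing Implicit Defensive.

(* If G is P4-free then G or its complement is disconnected (the induction adds one vertex
   at a time), so a prime graph on at least three vertices contains an induced P4.  Fix an
   induced bull H if there is one, an induced P4 otherwise.  Since neither G nor its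
   complement contains a hole, house, domino or gem (nor, in the second case, a bull), an
   exhaustive check over the ways one or two extra vertices can attach to H shows: every
   vertex outside H sees all of H, none of H, or is a twin of some h in H relative to H;
   and a vertex outside H that is not such a twin of h sees the twins of h as it sees h.
   Hence h with its outside twins is a module, and without twins H itself is a module, so
   primality forces G = H. *)

(** * Prime graphs contain an induced P4 *)

Section Decompositions.
Variables (T : finType) (r : rel T).

Definition nonadjacent (A B : {set T}) : Prop := forall a b, a \in A -> b \in B -> ~~ r a b.
Definition complete (A B : {set T}) : Prop := forall a b, a \in A -> b \in B -> r a b.

Definition decomposable (S : {set T}) : Prop := exists A B : {set T},
  [/\ A :|: B = S, [disjoint A & B], A != set0, B != set0 & nonadjacent A B \/ complete A B].

Lemma nonadjacent_setI (S C D : {set T}) :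
  nonadjacent C (S :\: C) -> nonadjacent D (S :\: D) -> nonadjacent (C :&: D) (S :\: (C :&: D)).
Proof.
move=> sepC sepD a b /setIP[aC aD] /setDP[bS]; rewrite inE negb_and => /orP[bC | bD].
  by apply: sepC; rewrite ?inE ?bC.
by apply: sepD; rewrite ?inE ?bD.
Qed.

(* [C] is the vertex set of the connected component of [x] in the subgraph induced by [S]. *)
Definition component (S C : {set T}) x : Prop :=
  [/\ x \in C, C \subset S, nonadjacent C (S :\: C) &
      forall D : {set T}, x \in D -> D \subset S -> nonadjacent D (S :\: D) -> C \subset D].

Lemma exists_component (S : {set T}) x : x \in S -> exists C, component S C x.
Proof.
move=> xS.
pose sep (C : {set T}) :=
  [&& x \in C, C \subset S & [forall a in C, forall b in S :\: C, ~~ r a b]].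
have sepP C : reflect (nonadjacent C (S :\: C)) [forall a in C, forall b in S :\: C, ~~ r a b].
  apply: (iffP forall_inP) => [H a b aC | H a aC]; first by move/forall_inP: (H a aC); apply.
  by apply/forall_inP => b; apply: H.
have sepS : sep S by rewrite /sep xS subxx; apply/sepP => a b _; rewrite setDv inE.
case: (arg_minnP (fun C : {set T} => #|C|) sepS) => C /and3P[xC CS /sepP sepC] Cmin.
exists C; split=> // D xD DS sepD.
have /Cmin : sep (C :&: D).
  rewrite /sep inE xC xD (subset_trans (subsetIl C D) CS) /=.
  exact/sepP/nonadjacent_setI.
by move=> leCD; apply/setIidPl/eqP; rewrite eqEcard subsetIl leCD.
Qed.

Hypotheses (r_sym : symmetric r) (r_irr : irreflexive r).

Lemma induced_P4 a b c d : r a b -> r b c -> r c d -> ~~ r a c -> ~~ r a d -> ~~ r b d ->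
  has_induced P4_rel r.
Proof.
move=> ab bc cd nac nad nbd.
have neq x y : r x y -> x != y by apply: contraTneq => ->; rewrite r_irr.
have ac : a != c by apply: contraNneq nad => ->.
have ad : a != d by apply: contraNneq nac => ->; rewrite r_sym.
have bd : b != d by apply: contraNneq nad => <-.
have U : uniq [:: a; b; c; d] by rewrite /= !inE !negb_or ac ad bd !neq.
exists (nth a [:: a; b; c; d]); split.
  by move=> i j /eqP; rewrite nth_uniq // => /eqP /val_inj.
move=> [[|[|[|[|i]]]] ?] // [[|[|[|[|j]]]] ?] //=;
  by rewrite /P4_rel /edges_rel /= ?r_irr ?(r_sym b a) ?(r_sym c b) ?(r_sym d c)
    ?(r_sym c a) ?(r_sym d a) ?(r_sym d b) ?ab ?bc ?cd ?(negbTE nac) ?(negbTE nad) ?(negbTE nbd).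
Qed.

Lemma decomposable_split (S C : {set T}) : C \subset S -> C != set0 ->
  (exists2 y, y \in S & y \notin C) -> nonadjacent C (S :\: C) \/ complete C (S :\: C) ->
  decomposable S.
Proof.
move=> CS C0 [y yS yC] hom; exists C, (S :\: C); split=> //.
- by rewrite -{2}(setID S C) (setIidPr CS).
- by apply/pred0P => z /=; rewrite !inE; case: (z \in C).
- by apply/set0Pn; exists y; rewrite inE yC.
Qed.

Lemma component_proper (S A B C : {set T}) x : A :|: B = S -> [disjoint A & B] ->
  A != set0 -> B != set0 -> nonadjacent A B -> component S C x ->
  exists2 w, w \in S & w \notin C.
Proof.
move=> defS AB A0 B0 nAB [xC CS sepC Cleast].
wlog xA : A B defS AB A0 B0 nAB / x \in A.
  move=> IH; have : x \in A :|: B by rewrite defS (subsetP CS).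
  case/setUP=> [xA | xB]; first exact: (IH A B).
  apply: (IH B A) => //; rewrite 1?setUC 1?disjoint_sym //.
  by move=> a b aB bA; rewrite r_sym; apply: nAB.
have CA : C \subset A.
  apply: Cleast => //; first by rewrite -defS subsetUl.
  move=> a b aA /setDP[]; rewrite -defS => /setUP[bA /negP // | bB] _; exact: nAB.
case/set0Pn: B0 => w wB; exists w; first by rewrite -defS inE wB orbT.
by apply: contraTN wB => /(subsetP CA) wA; rewrite (disjointFr AB wA).
Qed.

(* [v] sees [y] but not [x] in the component [C], so some edge [ab] of [C] separates the
   neighbours of [v] from its non-neighbours; [a b v z] is then an induced P4. *)
Lemma component_induced_P4 (S C : {set T}) x v y z : component S C x -> ~~ r v x ->
  y \in C -> r v y -> z \in S :\: C -> r v z -> has_induced P4_rel r.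
Proof.
move=> [xC CS sepC Cleast] vx yC vy zSC vz.
pose D := [set c in C | ~~ r v c].
have [a [b [aD bSD ab]]] : exists a b, [/\ a \in D, b \in S :\: D & r a b].
  have [/existsP[a /existsP[b /and3P[aD bD ab]]] | noedge] :=
    boolP [exists a, exists b, [&& a \in D, b \in S :\: D & r a b]]; first by exists a, b.
  have /subsetP/(_ y yC) : C \subset D.
    apply: Cleast; first by rewrite inE xC.
      by apply/subsetP=> c; rewrite inE => /andP[/(subsetP CS)].
    move=> a b aD bD; apply: contraNN noedge => ab.
    by apply/existsP; exists a; apply/existsP; exists b; rewrite aD bD.
  by rewrite inE yC vy.
have [aC nva] : a \in C /\ ~~ r v a by move: aD; rewrite inE => /andP[].
have bC : b \in C.
  by apply: contraTT ab => bC; apply: sepC => //; rewrite inE bC; case/setDP: bSD.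
have vb : r v b by move: bSD; rewrite !inE bC /= => /andP[/negbNE].
apply: (@induced_P4 a b v z) => //; try by rewrite r_sym.
- exact: sepC aC zSC.
- exact: sepC bC zSC.
Qed.

Lemma decomposable_setD1 (S A B : {set T}) v : ~ has_induced P4_rel r -> v \in S ->
  A :|: B = S :\ v -> [disjoint A & B] -> A != set0 -> B != set0 -> nonadjacent A B ->
  decomposable S.
Proof.
move=> noP4 vS defS' AB A0 B0 nAB; set S' := S :\ v in defS'.
have S'S : S' \subset S by apply: subsetDl.
have vS' : v \notin S' by rewrite !inE eqxx.
have [/forall_inP v_all | /forall_inPn[x xS' vx]] := boolP [forall y in S', r v y].
  apply: (@decomposable_split S [set v]); rewrite ?sub1set //.
  - by apply/set0Pn; exists v; rewrite set11.
  - case/set0Pn: A0 => a aA; have : a \in S' by rewrite -defS' inE aA.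
    by rewrite !inE => /andP[av aS]; exists a; rewrite ?inE.
  - by right=> a b /set1P ->; apply: v_all.
have [C compC] := exists_component xS'.
have [w wS' wC] := component_proper defS' AB A0 B0 nAB compC.
case: (compC) => xC CS' sepC _; have CS := subset_trans CS' S'S.
have [/forall_inP vC | /forall_inPn[y yC /negbNE vy]] := boolP [forall c in C, ~~ r v c].
  apply: (@decomposable_split S C) => //; first by apply/set0Pn; exists x.
    by exists v => //; apply: contra vS' => /(subsetP CS').
  left=> a b aC /setDP[bS bC]; have [-> | bv] := eqVneq b v; first by rewrite r_sym vC.
  by apply: sepC => //; rewrite !inE bv bC bS.
have [/forall_inP vC' | /forall_inPn[z zC' /negbNE vz]] :=
  boolP [forall c in S' :\: C, ~~ r v c]; last first.
  by case: noP4; apply: (component_induced_P4 compC vx yC vy zC' vz).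
apply: (@decomposable_split S (S' :\: C)).
- exact: subset_trans (subsetDl S' C) S'S.
- by apply/set0Pn; exists w; rewrite inE wC.
- by exists v; rewrite // inE negb_and vS' orbT.
left=> a b aC' /setDP[bS]; have [-> _ | bv] := eqVneq b v; first by rewrite r_sym vC'.
rewrite inE negb_and negbK (_ : b \in S') ?orbF => [bC|]; last by rewrite !inE bv.
by rewrite r_sym; apply: sepC.
Qed.
End Decompositions.

Lemma disjoint_neq (T : finType) (A B : {set T}) a b :
  [disjoint A & B] -> a \in A -> b \in B -> a != b.
Proof. by move=> AB aA; apply: contraTneq => <-; rewrite (disjointFr AB aA). Qed.

Section Complement.
Variables (T : finType) (r : rel T).
Hypotheses (r_sym : symmetric r) (r_irr : irreflexive r).

Lemma compl_rel_sym : symmetric (compl_rel r).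
Proof. by move=> x y; rewrite /compl_rel eq_sym r_sym. Qed.

Lemma compl_rel_irr : irreflexive (compl_rel r).
Proof. by move=> x; rewrite /compl_rel eqxx. Qed.

Lemma decomposable_compl (S : {set T}) : decomposable (compl_rel r) S -> decomposable r S.
Proof.
move=> [A [B [defS AB A0 B0 hom]]]; exists A, B; split=> //.
by case: hom => hom; [right | left] => a b aA bB; move: (hom a b aA bB);
  rewrite /compl_rel (disjoint_neq AB aA bB) //= negbK.
Qed.

Lemma has_induced_P4_compl : has_induced P4_rel (compl_rel r) -> has_induced P4_rel r.
Proof.
move=> [f [f_inj fH]].
have E (i j : 'I_4) : i != j -> r (f i) (f j) = ~~ P4_rel i j.
  by move=> ij; rewrite -fH /compl_rel (inj_eq f_inj) ij /= negbK.
pose o (k : nat) (lt_k4 : k < 4) := Ordinal lt_k4.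
by apply: (@induced_P4 _ _ r_sym r_irr (f (o 2 isT)) (f (o 0 isT)) (f (o 3 isT)) (f (o 1 isT)));
  rewrite E.
Qed.

Lemma P4_free_decomposable (S : {set T}) :
  ~ has_induced P4_rel r -> 1 < #|S| -> decomposable r S.
Proof.
move=> noP4 S_gt1; have [n cardS] : exists n, #|S| = n.+2 by exists #|S|.-2; lia.
elim: n S cardS {S_gt1} => [|n IH] S cardS.
  have /cards2P[a [b [ab defS]]] : #|S| == 2 by rewrite cardS.
  exists [set a], [set b]; split; rewrite ?defS ?disjoints1 ?inE //;
    try by apply/set0Pn; eexists; apply: set11.
  by case: (boolP (r a b)) => rab; [right | left] => x y /set1P-> /set1P->.
have [v vS] : exists v, v \in S by apply/set0Pn; rewrite -card_gt0 cardS.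
have cardS' : #|S :\ v| = n.+2 by move: cardS; rewrite (cardsD1 v S) vS => -[].
have [A [B [defS' AB A0 B0 [nAB | cAB]]]] := IH _ cardS'.
  exact: (decomposable_setD1 r_sym r_irr noP4 vS defS' AB A0 B0 nAB).
apply: decomposable_compl.
apply: (decomposable_setD1 compl_rel_sym compl_rel_irr _ vS defS' AB A0 B0).
  by move/has_induced_P4_compl.
by move=> a b aA bB; rewrite /compl_rel (disjoint_neq AB aA bB) cAB.
Qed.

Lemma module_of_homogeneous (A B : {set T}) : A :|: B = setT ->
  nonadjacent r A B \/ complete r A B -> is_module r B.
Proof.
move=> defT hom v vB; have : v \in A :|: B by rewrite defT inE.
by rewrite inE (negbTE vB) orbF => vA; case: hom => hom; [right | left] => x; apply: hom.
Qed.

Lemma prime_has_induced_P4 : 2 < #|T| -> prime_graph r -> has_induced P4_rel r.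
Proof.
move=> cardT r_prime; case: (classic (has_induced P4_rel r)) => // noP4.
have [A [B [defT AB A0 B0 hom]]] : decomposable r setT.
  by apply: P4_free_decomposable; rewrite // cardsT ltnW.
have small (X Y : {set T}) : [disjoint Y & X] -> Y != set0 -> is_module r X -> #|X| <= 1.
  move=> YX /set0Pn[y yY] /r_prime[] // defX.
  have yX : y \in X by rewrite defX inE.
  by move: (disjoint_neq YX yY yX); rewrite eqxx.
have cardA : #|A| <= 1.
  apply: (small A B); rewrite 1?disjoint_sym //; apply: (@module_of_homogeneous B).
    by rewrite setUC.
  by case: hom => hom; [left | right] => a b aB bA; rewrite r_sym; apply: hom.
have cardB : #|B| <= 1 by apply: (small B A) => //; apply: (module_of_homogeneous defT).
by move: cardT; rewrite -cardsT -defT cardsU (disjoint_setI0 AB) cards0; lia.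
Qed.
End Complement.

(** * Adjacency tables and the exhaustive checks *)

(* The VM evaluates both arguments of [&&] and [||]; [allb], [hasb] and the [if]-chains below
   short-circuit, which keeps the checks fast. *)
Fixpoint allb (T : Type) (p : pred T) (s : seq T) : bool :=
  if s is x :: s' then (if p x then allb p s' else false) else true.

Fixpoint hasb (T : Type) (p : pred T) (s : seq T) : bool :=
  if s is x :: s' then (if p x then true else hasb p s') else false.

Lemma allbE (T : Type) (p : pred T) s : allb p s = all p s.
Proof. by elim: s => //= x s ->; case: (p x). Qed.

Lemma hasbE (T : Type) (p : pred T) s : hasb p s = has p s.
Proof. by elim: s => //= x s ->; case: (p x). Qed.

Definition adj_table (T : Type) (e : rel T) (vs : seq T) : seq (seq bool) :=
  [seq [seq e x y | y <- vs] | x <- vs].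

Definition adj (M : seq (seq bool)) (a b : nat) : bool := nth false (nth [::] M a) b.

(* [enum 'I_n] does not reduce in the VM: [insub] goes through an opaque reflection lemma. *)
Fixpoint ords (n : nat) : seq 'I_n :=
  if n is n'.+1 then ord0 :: map (lift ord0) (ords n') else [::].

Definition pattern (n : nat) (h : rel 'I_n) : seq (seq bool) := adj_table h (ords n).

Definition add_vertex (M : seq (seq bool)) (s : seq bool) : seq (seq bool) :=
  rcons [seq rcons rb.1 rb.2 | rb <- zip M s] (rcons s false).

Definition compl_table (M : seq (seq bool)) : seq (seq bool) :=
  [seq [seq (a != b) && ~~ adj M a b | b <- iota 0 (size M)] | a <- iota 0 (size M)].

Fixpoint bool_seqs (n : nat) : seq (seq bool) :=
  if n is n'.+1 then [seq b :: s | b <- [:: false; true], s <- bool_seqs n'] else [:: [::]].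

Fixpoint injections (k m : nat) : seq (seq nat) :=
  if m is m'.+1 then [seq a :: p | p <- injections k m', a <- [seq a <- iota 0 k | a \notin p]]
  else [:: [::]].

(* Entry [m] lists the injections of an [m]-vertex pattern into [k] vertices.  The checks
   compute it once and pass it to every [induces_in] test on [k]-vertex tables. *)
Definition injection_table (k : nat) : seq (seq (seq nat)) :=
  [seq injections k m | m <- iota 0 k.+1].

Definition induces_in (J : seq (seq (seq nat))) (X M : seq (seq bool)) : bool :=
  hasb (fun p => allb (fun i => allb (fun j => adj M (nth 0 p i) (nth 0 p j) == adj X i j)
                                     (iota 0 (size X))) (iota 0 (size X)))
       (nth [::] J (size X)).

Definition DH_obstructed_in (J : seq (seq (seq nat))) (M : seq (seq bool)) : bool :=
  if hasb (fun n => induces_in J (pattern (@cycle_rel n)) M) (iota 5 (size M - 4)) then true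
  else if induces_in J (pattern house_rel) M then true
  else if induces_in J (pattern domino_rel) M then true
  else induces_in J (pattern gem_rel) M.

Definition forbidden_in (J : seq (seq (seq nat))) (bull_free : bool) (M : seq (seq bool)) :=
  if DH_obstructed_in J M then true
  else if DH_obstructed_in J (compl_table M) then true
  else if bull_free then induces_in J (pattern bull_rel) M else false.

Definition twin_row (H : seq (seq bool)) (s : seq bool) (h : nat) : bool :=
  all (fun i => (i == h) || (nth false s i == adj H h i)) (iota 0 (size H)).

Definition attachment_check (bull_free : bool) (H : seq (seq bool)) : bool :=
  let J := injection_table (size H).+1 in
  allb (fun s => if all id s then true else if ~~ has id s then true
                 else if has (twin_row H s) (iota 0 (size H)) then true
                 else forbidden_in J bull_free (add_vertex H s)) (bool_seqs (size H)).

(* For extra vertices [x] with trace [s] twin to row [h] and [w] with trace [t] (whose last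
   entry is the adjacency of [w] and [x]): [t] is also twin to row [h], or [w] sees [x] as
   it sees [h], or there is an obstruction. *)
Definition twin_check (bull_free : bool) (H : seq (seq bool)) : bool :=
  let J := injection_table (size H).+2 in
  allb (fun h => allb (fun s => if twin_row H s h then
      allb (fun t => if twin_row H t h then true
                     else if nth false t (size H) == nth false t h then true
                     else forbidden_in J bull_free (add_vertex (add_vertex H s) t))
           (bool_seqs (size H).+1)
    else true) (bool_seqs (size H))) (iota 0 (size H)).

Lemma P4_attachment_check : attachment_check true (pattern P4_rel).
Proof. by vm_compute. Qed.

Lemma P4_twin_check : twin_check true (pattern P4_rel).
Proof. by vm_compute. Qed.

Lemma bull_attachment_check : attachment_check false (pattern bull_rel).
Proof. by vm_compute. Qed.

Lemma bull_twin_check : twin_check false (pattern bull_rel).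
Proof. by vm_compute. Qed.

Lemma mem_bool_seqs s : s \in bool_seqs (size s).
Proof. by elim: s => [|b s IH]; rewrite ?inE //; apply/allpairsPdep; exists b, s; case: b. Qed.

Lemma injectionsP k m p :
  p \in injections k m -> [/\ size p = m, uniq p & forall a, a \in p -> a < k].
Proof.
elim: m p => [|m IH] p /=; first by rewrite inE => /eqP ->.
case/allpairsPdep=> q [a [/IH[<- uq ltq]]]; rewrite mem_filter mem_iota /= => /andP[aq ak] ->.
by split; rewrite /= ?aq ?uq // => b; rewrite inE => /predU1P[-> | /ltq].
Qed.

Lemma mem_injection_table k m p :
  p \in nth [::] (injection_table k) m -> p \in injections k m.
Proof.
rewrite /injection_table; case: (ltnP m k.+1) => [mk | km].
  by rewrite (nth_map 0) ?size_iota // nth_iota.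
by rewrite nth_default ?size_map ?size_iota.
Qed.

Lemma ords_enum n : ords n = enum 'I_n.
Proof. by elim: n => [|n IH] /=; rewrite ?enum_ord0 // enum_ordSl IH. Qed.

Lemma size_adj_table (T : Type) (e : rel T) vs : size (adj_table e vs) = size vs.
Proof. exact: size_map. Qed.

Lemma adj_table_nth (T : Type) (e : rel T) vs x0 a b : a < size vs -> b < size vs ->
  adj (adj_table e vs) a b = e (nth x0 vs a) (nth x0 vs b).
Proof. by move=> ltav ltbv; rewrite /adj (nth_map x0) // (nth_map x0). Qed.

Lemma size_pattern n (h : rel 'I_n) : size (pattern h) = n.
Proof. by rewrite size_adj_table ords_enum size_enum_ord. Qed.

Lemma adj_pattern n (h : rel 'I_n) (i j : 'I_n) : adj (pattern h) i j = h i j.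
Proof.
by rewrite (adj_table_nth _ i) ?ords_enum ?size_enum_ord ?ltn_ord // !nth_ord_enum.
Qed.

Lemma adj_table_map (T U : Type) (e : rel T) (h : rel U) (f : U -> T) us :
  (forall a b, e (f a) (f b) = h a b) -> adj_table e (map f us) = adj_table h us.
Proof.
move=> fh; rewrite /adj_table -map_comp; apply: eq_map => a /=.
by rewrite -map_comp; apply: eq_map => b; apply: fh.
Qed.

Lemma adj_table_compl (T : finType) (e : rel T) vs : uniq vs ->
  adj_table (compl_rel e) vs = compl_table (adj_table e vs).
Proof.
case: vs => [//|x0 vs']; move: (x0 :: vs') => {vs'} vs uvs.
rewrite /compl_table size_adj_table /adj_table -[vs in LHS](mkseq_nth x0) /mkseq -map_comp.
apply/eq_in_map => a; rewrite mem_iota /= => lta; rewrite -map_comp.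
apply/eq_in_map => b; rewrite mem_iota /= => ltb.
by rewrite (adj_table_nth _ x0) // /compl_rel nth_uniq.
Qed.

Lemma twin_row_rcons H s b h : size s = size H -> twin_row H (rcons s b) h = twin_row H s h.
Proof.
move=> sizes; apply: eq_in_all => i; rewrite mem_iota /= => ltiH.
by rewrite nth_rcons sizes ltiH.
Qed.

Section Realization.
Variables (T : finType) (e : rel T).

Lemma adj_table_rcons vs x : symmetric e -> irreflexive e ->
  adj_table e (rcons vs x) = add_vertex (adj_table e vs) [seq e x y | y <- vs].
Proof.
move=> e_sym e_irr; rewrite /adj_table /add_vertex !map_rcons e_irr zip_map -map_comp.
by congr rcons; apply: eq_map => y /=; rewrite map_rcons e_sym.
Qed.

Lemma induces_sound n (h : rel 'I_n) vs : uniq vs ->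
  induces_in (injection_table (size vs)) (pattern h) (adj_table e vs) -> has_induced h e.
Proof.
move=> uvs; rewrite /induces_in hasbE size_pattern => /hasP[p].
move=> /mem_injection_table/injectionsP[sizep up ltp]; rewrite allbE => /allP p_ind.
case: vs uvs ltp p_ind => [|x0 vs'] uvs ltp p_ind.
  case: p sizep ltp {up p_ind} => [n0 _ | a p _ /(_ a (mem_head _ _)) //].
  move: h; rewrite -n0 => h.
  have f : 'I_0 -> T by case.
  by exists f; split=> [[] | []].
have ltpi (i : 'I_n) : nth 0 p i < size (x0 :: vs') by apply/ltp/mem_nth; rewrite sizep.
exists (fun i => nth x0 (x0 :: vs') (nth 0 p i)); split.
  by move=> i j /eqP; rewrite nth_uniq // nth_uniq ?sizep // => /eqP/val_inj.
move=> i j; move: (p_ind i); rewrite mem_iota ltn_ord => /(_ isT); rewrite allbE.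
move=> /allP/(_ j); rewrite mem_iota ltn_ord => /(_ isT) /eqP.
by rewrite (adj_table_nth _ x0) // adj_pattern.
Qed.

Lemma DH_obstructed_sound vs : uniq vs ->
  DH_obstructed_in (injection_table (size vs)) (adj_table e vs) -> ~ distance_hereditary e.
Proof.
move=> uvs obstr [no_hole [no_house [no_domino no_gem]]]; move: obstr.
rewrite /DH_obstructed_in hasbE size_adj_table.
case: hasP => [[n] | _].
  by rewrite mem_iota => /andP[n5 _] /(induces_sound uvs) /(no_hole n n5).
case: ifP => [/(induces_sound uvs) // | _].
case: ifP => [/(induces_sound uvs) // | _].
by move/(induces_sound uvs).
Qed.
End Realization.

Lemma forbidden_sound (T : finType) (e : rel T) (bull_free : bool) vs :
  DH_coDH e -> (bull_free -> ~ has_induced bull_rel e) -> uniq vs ->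
  ~~ forbidden_in (injection_table (size vs)) bull_free (adj_table e vs).
Proof.
move=> [DH coDH] no_bull uvs; apply/negP; rewrite /forbidden_in.
case: ifP => [/(DH_obstructed_sound uvs) // | _].
case: ifP => [|_]; first by rewrite -adj_table_compl // => /(DH_obstructed_sound uvs).
by case: bull_free no_bull => // /(_ isT) no_bull /(induces_sound uvs) /no_bull.
Qed.

(** * Vertices outside an induced P4 or bull *)

Section Attachments.
Variables (T : finType) (e : rel T) (bull_free : bool).
Hypotheses (e_sym : symmetric e) (e_irr : irreflexive e) (e_DH : DH_coDH e)
  (no_bull : bull_free -> ~ has_induced bull_rel e).
Variable vs : seq T.
Hypotheses (vs_uniq : uniq vs) (attach : attachment_check bull_free (adj_table e vs))
  (twins : twin_check bull_free (adj_table e vs)).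

Definition twin_on (x y : T) : bool := all (fun z => (z == y) || (e x z == e y z)) vs.

Lemma twin_row_trace x h : h < size vs ->
  twin_row (adj_table e vs) [seq e x z | z <- vs] h = twin_on x (nth x vs h).
Proof.
move=> lthv; rewrite /twin_row /twin_on size_adj_table -[X in _ = all _ X](mkseq_nth x) all_map.
apply: eq_in_all => i; rewrite mem_iota /= => ltiv.
by rewrite nth_uniq // (nth_map x) // (adj_table_nth _ x) // e_sym.
Qed.

Lemma trace_cases x : x \notin vs ->
  [\/ all (e x) vs, all (fun z => ~~ e x z) vs | has (twin_on x) vs].
Proof.
move=> xvs; have uxs : uniq (rcons vs x) by rewrite rcons_uniq xvs vs_uniq.
have := forbidden_sound e_DH no_bull uxs; rewrite size_rcons adj_table_rcons //.
have s_mem := mem_bool_seqs [seq e x z | z <- vs]; rewrite size_map in s_mem.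
move: attach; rewrite /attachment_check allbE size_adj_table => /allP/(_ _ s_mem).
case: ifP => [all_x _ _ | _]; first by apply: Or31; rewrite all_map in all_x.
case: ifP => [none_x _ _ | _]; first by apply: Or32; rewrite has_map -all_predC in none_x.
case: ifP => [/hasP[h] | _]; last by move=> ->.
rewrite mem_iota /= => lthv; rewrite twin_row_trace // => twin_x _ _.
by apply: Or33; apply/hasP; exists (nth x vs h); rewrite ?mem_nth.
Qed.

Lemma twin_attachment x w y : x \notin vs -> w \notin vs -> x != w -> y \in vs ->
  twin_on x y -> ~~ twin_on w y -> e w x = e w y.
Proof.
move=> xvs wvs xw yvs twin_x not_twin_w.
have lthv : index y vs < size vs by rewrite index_mem.
have uxws : uniq (rcons (rcons vs x) w).
  by rewrite !rcons_uniq mem_rcons inE negb_or eq_sym xw wvs xvs vs_uniq.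
have := forbidden_sound e_DH no_bull uxws; rewrite !size_rcons !adj_table_rcons ?map_rcons //.
have s_mem := mem_bool_seqs [seq e x z | z <- vs]; rewrite size_map in s_mem.
have t_mem := mem_bool_seqs (rcons [seq e w z | z <- vs] (e w x)).
rewrite size_rcons size_map in t_mem.
move: twins; rewrite /twin_check allbE size_adj_table => /allP/(_ (index y vs)).
rewrite mem_iota lthv => /(_ isT); rewrite allbE => /allP/(_ _ s_mem).
rewrite twin_row_trace // nth_index // twin_x allbE => /allP/(_ _ t_mem).
rewrite twin_row_rcons ?size_map ?size_adj_table // twin_row_trace // nth_index //.
rewrite (negbTE not_twin_w) !nth_rcons size_map ltnn eqxx lthv (nth_map y) // nth_index //.
by case: eqP => // _ ->.
Qed.

Lemma twin_class_module y : y \in vs -> is_module e (y |: [set x | (x \notin vs) && twin_on x y]).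
Proof.
move=> yvs v; rewrite !inE negb_or negb_and negbK => /andP[vy vM].
have same z : z \in y |: [set x | (x \notin vs) && twin_on x y] -> e v z = e v y.
  rewrite !inE => /predU1P[-> // | /andP[zvs twin_z]].
  have [vvs | vvs] := boolP (v \in vs).
    by move/allP/(_ v vvs): twin_z; rewrite (negbTE vy) /= => /eqP; rewrite e_sym [e y v]e_sym.
  rewrite (negbTE vvs) /= in vM; apply: twin_attachment => //.
  by apply: contraTneq twin_z => ->.
by case: (boolP (e v y)) => evy; [left | right] => z /same ->.
Qed.

Lemma vertices_module : (forall x, x \notin vs -> ~~ has (twin_on x) vs) ->
  is_module e [set x in vs].
Proof.
move=> no_twin v; rewrite inE => vvs.
case: (trace_cases vvs) => [/allP all_v | /allP none_v | twin_v].
- by left=> z; rewrite inE => /all_v.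
- by right=> z; rewrite inE => /none_v.
- by move: (no_twin v vvs); rewrite twin_v.
Qed.

Lemma prime_covered : prime_graph e -> 1 < size vs -> forall x, x \in vs.
Proof.
move=> e_prime vs2.
case: (boolP [exists x, (x \notin vs) && has (twin_on x) vs]); last first.
  rewrite negb_exists => /forallP no_twin x.
  have vs_module : is_module e [set x in vs].
    by apply: vertices_module => z zvs; move: (no_twin z); rewrite zvs.
  case: (e_prime _ vs_module) => [| vs_T]; last by rewrite -[x \in vs]inE vs_T in_setT.
  by rewrite cardsE (card_uniqP vs_uniq) leqNgt vs2.
move=> /existsP[x /andP[xvs /hasP[y yvs twin_x]]].
have [z zvs zy] : exists2 z, z \in vs & z != y.
  apply/hasP; apply: contraTT vs2 => /hasPn all_y; rewrite -leqNgt.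
  by apply: (uniq_leq_size vs_uniq (s2 := [:: y])) => z /all_y; rewrite negbK inE.
exfalso; have [M_le1 | M_T] := e_prime _ (twin_class_module yvs).
  move: M_le1; apply/negP; rewrite -ltnNge (cardsD1 y) setU11 ltnS card_gt0.
  apply/set0Pn; exists x; rewrite !inE xvs twin_x orbT andbT.
  by apply: contraNneq xvs => ->.
by have := in_setT z; rewrite -M_T !inE zvs (negbTE zy).
Qed.
End Attachments.

Lemma pattern_isomorphic (T : finType) (e : rel T) (bull_free : bool) n (h : rel 'I_n)
    (f : 'I_n -> T) :
  symmetric e -> irreflexive e -> DH_coDH e -> (bull_free -> ~ has_induced bull_rel e) ->
  prime_graph e -> 1 < n -> attachment_check bull_free (pattern h) ->
  twin_check bull_free (pattern h) -> injective f -> (forall i j, e (f i) (f j) = h i j) ->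
  isomorphic_to h e.
Proof.
move=> e_sym e_irr e_DH no_bull e_prime n2 attach twins f_inj fh.
have vs_table : adj_table e (map f (enum 'I_n)) = pattern h.
  by rewrite (adj_table_map _ fh) /pattern ords_enum.
have vs_uniq : uniq (map f (enum 'I_n)) by rewrite map_inj_uniq ?enum_uniq.
rewrite -vs_table in attach twins.
have covered := prime_covered e_sym e_irr e_DH no_bull vs_uniq attach twins e_prime.
exists f; split=> //; apply: inj_card_bij => //.
apply: (@leq_trans (size (map f (enum 'I_n)))); last by rewrite size_map size_enum_ord card_ord.
apply: leq_trans (card_size _); apply: subset_leq_card; apply/subsetP => x _.
by apply: covered; rewrite size_map size_enum_ord.
Qed.

Theorem theorem1 (T : finType) (e : rel T) :
  simple_graph e -> 3 <= #|T| -> prime_graph e -> DH_coDH e ->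
  isomorphic_to P4_rel e \/ isomorphic_to bull_rel e.
Proof.
move=> [e_sym e_irr] cardT e_prime e_DH.
have [[f [f_inj fh]] | no_bull] := classic (has_induced bull_rel e).
  right; apply: (pattern_isomorphic (bull_free := false) e_sym e_irr e_DH _ e_prime _
    bull_attachment_check bull_twin_check f_inj fh) => //.
have [f [f_inj fh]] := prime_has_induced_P4 e_sym e_irr cardT e_prime.
left; apply: (pattern_isomorphic (bull_free := true) e_sym e_irr e_DH _ e_prime _
  P4_attachment_check P4_twin_check f_inj fh) => //.
Qed.
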